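(* Every statistically complete $S$-metric space is complete.
   Context: An $S$-metric on a nonempty set $X$ is a function $S:X^3\to[0,\infty)$ such that for all $x,y,z,a\in X$: $S(x,y,z)=0$ if and only if $x=y=z$, and $S(x,y,z)\le S(x,x,a)+S(y,y,a)+S(z,z,a)$. A sequence $\{x_n\}$ converges to $x$ if for every $\varepsilon>0$ there is $k$ with $S(x_n,x_n,x)<\varepsilon$ for all $n\ge k$; it is Cauchy if for every $\varepsilon>0$ there is $k$ with $S(x_n,x_n,x_m)<\varepsilon$ for all $n,m\ge k$; $(X,S)$ is complete if every Cauchy sequence converges. For $B\subset\mathbb N$ the natural density is $\delta(B)=\lim_{n\to\infty}\frac{|\{k\in B:k\le n\}|}{n}$ when the limit exists. A sequence $\{x_n\}$ is statistically convergent to $x\in X$ if for every $\varepsilon>0$, $\delta(\{n: S(x_n,x_n,x)\ge\varepsilon\})=0$; it is statistically Cauchy if for every $\varepsilon>0$ there exists $N\in\mathbb N$ with $\delta(\{n: S(x_n,x_n,x_N)\ge\varepsilon\})=0$. $(X,S)$ is statistically complete if every statistically Cauchy sequence in $X$ is statistically convergent (to some point of $X$). *)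

From Stdlib Require Import Reals Lra Lia Classical ClassicalEpsilon.
Open Scope R_scope.

Definition is_Smetric {X : Type} (S : X -> X -> X -> R) : Prop :=
  (forall x y z, 0 <= S x y z) /\
  (forall x y z, S x y z = 0 <-> (x = y /\ y = z)) /\
  (forall x y z a, S x y z <= S x x a + S y y a + S z z a).

Definition S_converges {X : Type} (S : X -> X -> X -> R) (u : nat -> X) (x : X) : Prop :=
  forall eps, eps > 0 -> exists k, forall n, (n >= k)%nat -> S (u n) (u n) x < eps.

Definition S_Cauchy {X : Type} (S : X -> X -> X -> R) (u : nat -> X) : Prop :=
  forall eps, eps > 0 -> exists k, forall n m, (n >= k)%nat -> (m >= k)%nat ->
    S (u n) (u n) (u m) < eps.

Definition S_complete {X : Type} (S : X -> X -> X -> R) : Prop :=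
  forall u : nat -> X, S_Cauchy S u -> exists x, S_converges S u x.

Fixpoint count_below (B : nat -> Prop) (n : nat) : nat :=
  match n with
  | O => O
  | S n' => (count_below B n' + (if excluded_middle_informative (B n') then 1 else 0))%nat
  end.

Definition has_density (B : nat -> Prop) (d : R) : Prop :=
  Un_cv (fun n => INR (count_below B (S n)) / INR (S n)) d.

Definition stat_converges {X : Type} (S : X -> X -> X -> R) (u : nat -> X) (x : X) : Prop :=
  forall eps, eps > 0 -> has_density (fun n => S (u n) (u n) x >= eps) 0.

Definition stat_Cauchy {X : Type} (S : X -> X -> X -> R) (u : nat -> X) : Prop :=
  forall eps, eps > 0 -> exists N : nat,
    has_density (fun n => S (u n) (u n) (u N) >= eps) 0.

Definition stat_complete {X : Type} (S : X -> X -> X -> R) : Prop :=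
  forall u : nat -> X, stat_Cauchy S u -> exists x, stat_converges S u x.

(* A Cauchy sequence is statistically Cauchy, since for each eps only finitely many
   terms lie eps-far from a late enough term; so it has a statistical limit x.
   A set of density zero cannot contain a whole tail of the naturals, hence
   arbitrarily late terms u n are eps-close to x, and the Cauchy property
   together with the S-metric triangle inequality carries this to the whole tail. *)
From Stdlib Require Import Arith Reals Lra Lia Classical ClassicalEpsilon.
Open Scope R_scope.

Lemma count_below_le (B : nat -> Prop) (n : nat) : (count_below B n <= n)%nat.
Proof.
  induction n as [|n IH]; simpl; [lia|].
  destruct (excluded_middle_informative (B n)); lia.
Qed.

Lemma count_below_le_bound (B : nat -> Prop) (k : nat) :
  (forall i, B i -> (i < k)%nat) -> forall n, (count_below B n <= k)%nat.
Proof.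
  intros Hk n; induction n as [|n IH]; simpl; [lia|].
  destruct (excluded_middle_informative (B n)) as [Bn|_]; [|lia].
  pose proof (Hk n Bn); pose proof (count_below_le B n); lia.
Qed.

Lemma count_below_ge_tail (B : nat -> Prop) (k : nat) :
  (forall i, (k <= i)%nat -> B i) -> forall n, (n <= count_below B n + k)%nat.
Proof.
  intros Hk n; induction n as [|n IH]; simpl; [lia|].
  destruct (excluded_middle_informative (B n)) as [_|nBn]; [lia|].
  destruct (le_lt_dec k n) as [kn|nk]; [contradiction (nBn (Hk n kn))|lia].
Qed.

Lemma has_density0_bounded (B : nat -> Prop) (k : nat) :
  (forall i, B i -> (i < k)%nat) -> has_density B 0.
Proof.
  intros Hk eps Heps.
  destruct (INR_archimed eps (INR k) Heps) as [N HN].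
  exists N; intros n Hn; unfold R_dist.
  set (c := INR (count_below B (S n))); set (s := INR (S n)).
  assert (Hc : c <= INR k) by apply le_INR, count_below_le_bound, Hk.
  assert (HNs : INR N <= s) by (apply le_INR; lia).
  assert (Hs : 0 < s) by (apply lt_0_INR; lia).
  assert (Hc0 : 0 <= c) by apply pos_INR.
  rewrite Rminus_0_r, Rabs_pos_eq by (apply Rmult_le_pos; [lra|left; apply Rinv_0_lt_compat, Hs]).
  apply (Rmult_lt_reg_r s); [exact Hs|].
  unfold Rdiv; rewrite Rmult_assoc, Rinv_l by lra.
  nra.
Qed.

Lemma has_density0_exists_notin (B : nat -> Prop) (k : nat) :
  has_density B 0 -> exists n, (k <= n)%nat /\ ~ B n.
Proof.
  intros HB; apply NNPP; intros Hnone.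
  assert (Htail : forall i, (k <= i)%nat -> B i).
  { intros i Hi; apply NNPP; intros nBi; apply Hnone; eauto. }
  destruct (HB (1/2)) as [N HN]; [lra|].
  set (n := (N + 2 * k + 1)%nat).
  specialize (HN n ltac:(unfold n; lia)); unfold R_dist in HN.
  assert (Hcount : (S n <= count_below B (S n) + k)%nat) by apply count_below_ge_tail, Htail.
  assert (Hk : (2 * k <= S n)%nat) by (unfold n; lia).
  apply le_INR in Hcount; apply le_INR in Hk.
  rewrite plus_INR in Hcount; rewrite mult_INR in Hk; simpl (INR 2) in Hk.
  set (c := INR (count_below B (S n))) in *; set (s := INR (S n)) in *.
  assert (Hs : 0 < s) by (apply lt_0_INR; lia).
  assert (Hc0 : 0 <= c) by apply pos_INR.
  rewrite Rminus_0_r, Rabs_pos_eq in HN by (apply Rmult_le_pos; [lra|left; apply Rinv_0_lt_compat, Hs]).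
  apply (Rmult_lt_compat_r s) in HN; [|exact Hs].
  unfold Rdiv in HN; rewrite Rmult_assoc, Rinv_l in HN by lra.
  lra.
Qed.

Lemma S_Cauchy_stat_Cauchy (X : Type) (S : X -> X -> X -> R) (u : nat -> X) :
  S_Cauchy S u -> stat_Cauchy S u.
Proof.
  intros Hu eps Heps.
  destruct (Hu eps Heps) as [k Hk]; exists k.
  apply (has_density0_bounded _ k); intros i Hi.
  destruct (le_lt_dec k i) as [ki|ik]; [|exact ik].
  specialize (Hk i k ki (le_n k)); lra.
Qed.

Section SMetric.

Variables (X : Type) (S : X -> X -> X -> R).
Hypothesis HS : is_Smetric S.

Lemma Smetric_diag (x : X) : S x x x = 0.
Proof. apply (proj1 (proj2 HS)); auto. Qed.

Lemma Smetric_sym (x y : X) : S x x y = S y y x.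
Proof.
  destruct HS as [_ [_ Htri]].
  pose proof (Htri x x y x); pose proof (Htri y y x y).
  rewrite Smetric_diag in *; lra.
Qed.

Lemma Smetric_triangle (x y z : X) : S x x y <= 2 * S x x z + S z z y.
Proof.
  destruct HS as [_ [_ Htri]].
  pose proof (Htri x x y z); rewrite (Smetric_sym y z) in *; lra.
Qed.

Lemma S_Cauchy_stat_converges (u : nat -> X) (x : X) :
  S_Cauchy S u -> stat_converges S u x -> S_converges S u x.
Proof.
  intros Hu Hx eps Heps.
  destruct (Hu (eps / 3)) as [k Hk]; [lra|].
  destruct (has_density0_exists_notin _ k (Hx (eps / 3) ltac:(lra))) as [n [Hkn Hn]].
  exists k; intros m Hkm.
  pose proof (Smetric_triangle (u m) x (u n)).
  specialize (Hk m n Hkm Hkn); lra.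
Qed.

End SMetric.

Theorem theorem3p6 (X : Type) (S : X -> X -> X -> R) :
  is_Smetric S -> stat_complete S -> S_complete S.
Proof.
  intros HS Hstat u Hu.
  destruct (Hstat u (S_Cauchy_stat_Cauchy X S u Hu)) as [x Hx].
  exists x; exact (S_Cauchy_stat_converges X S HS u x Hu Hx).
Qed.
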